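(* A graph $G$ is non-ambiguous if and only if it is covering-minimal.
   Context: Graphs are finite, simple, undirected, connected; $B_G(v)$ denotes the ball of radius $1$ around $v$ (vertices $N_G(v)\cup\{v\}$ and the edges from $v$). A labelling $\lambda$ of the vertices of $G$ is locally bijective if (1) for each $v$ and all $v',v''\in B_G(v)$, $\lambda(v')=\lambda(v'')$ iff $v'=v''$, and (2) for all $v',v''$ with $\lambda(v')=\lambda(v'')$, the labelled balls $(B_G(v'),\lambda)$ and $(B_G(v''),\lambda)$ are isomorphic. $G$ is ambiguous if it has a locally bijective labelling that is not bijective, and non-ambiguous otherwise. $G$ is a covering of $H$ via $\gamma$ if $\gamma$ is a surjective homomorphism whose restriction to each $B_G(v)$ is a bijection onto $B_H(\gamma(v))$; $G$ is covering-minimal if every covering from $G$ to some graph $H$ is a bijection. *)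

From mathcomp Require Import all_boot.
Set Implicit Arguments. Unset Strict Implicit. Unset Printing Implicit Defensive.

Definition simple_graph (T : finType) (e : rel T) : Prop :=
  symmetric e /\ irreflexive e.

Definition connected_graph (T : finType) (e : rel T) : Prop :=
  forall x y : T, connect e x y.

Definition is_graph (T : finType) (e : rel T) : Prop :=
  simple_graph e /\ connected_graph e.

Definition ball (T : finType) (e : rel T) (v : T) : {set T} :=
  [set u | (u == v) || e v u].

(* edge relation of the ball B_G(v): only the edges incident to v *)
Definition ball_edge (T : finType) (e : rel T) (v : T) (x y : T) : bool :=
  [&& x \in ball e v, y \in ball e v &
      ((x == v) && e v y) || ((y == v) && e x v)].

Definition labelled_ball_iso (T : finType) (e : rel T) (L : Type)
    (lam : T -> L) (v1 v2 : T) : Prop :=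
  exists f : T -> T,
    [/\ {in ball e v1 &, injective f},
        f @: ball e v1 = ball e v2,
        {in ball e v1, forall x, lam (f x) = lam x} &
        {in ball e v1 &, forall x y, ball_edge e v1 x y = ball_edge e v2 (f x) (f y)}].

Definition locally_bijective (T : finType) (e : rel T) (lam : T -> nat) : Prop :=
  (forall v, {in ball e v &, forall x y, lam x = lam y <-> x = y}) /\
  (forall v1 v2, lam v1 = lam v2 -> labelled_ball_iso e lam v1 v2).

Definition ambiguous (T : finType) (e : rel T) : Prop :=
  exists lam : T -> nat, locally_bijective e lam /\ ~ injective lam.

Definition non_ambiguous (T : finType) (e : rel T) : Prop := ~ ambiguous e.

Definition covering (T T' : finType) (e : rel T) (e' : rel T') (gamma : T -> T') : Prop :=
  [/\ forall y : T', exists x : T, gamma x = y,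
      forall x y : T, e x y -> e' (gamma x) (gamma y) &
      forall v : T, {in ball e v &, injective gamma} /\
                    gamma @: ball e v = ball e' (gamma v)].

Definition covering_minimal (T : finType) (e : rel T) : Prop :=
  forall (T' : finType) (e' : rel T') (gamma : T -> T'),
    is_graph e' -> covering e e' gamma -> bijective gamma.

From mathcomp Require Import all_boot.
Set Implicit Arguments. Unset Strict Implicit. Unset Printing Implicit Defensive.

(* A covering gamma : G -> H yields the locally bijective labelling x |-> gamma x
   of G, injective iff gamma is. Conversely a locally bijective labelling lam
   of G is a covering of the quotient graph G/lam whose vertices are the label
   classes, two classes being adjacent when some of their members are.  Hence
   non-injective locally bijective labellings and non-bijective coverings
   determine each other. *)

Section Balls.
Variables (T : finType) (e : rel T).

Lemma ball_center v : v \in ball e v.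
Proof. by rewrite inE eqxx. Qed.

Lemma ball_neighbour v u : e v u -> u \in ball e v.
Proof. by rewrite inE => ->; rewrite orbT. Qed.

Hypothesis (e_sym : symmetric e) (e_irr : irreflexive e).

Lemma ball_edgeE v x y : x \in ball e v -> y \in ball e v ->
  ball_edge e v x y = ((x == v) && (y != v)) || ((y == v) && (x != v)).
Proof.
have adj_center z : z \in ball e v -> e v z = (z != v).
  by rewrite inE; case: eqVneq => [->|]; rewrite ?e_irr.
move=> xin yin; rewrite /ball_edge xin yin /=.
by rewrite (adj_center y yin) e_sym (adj_center x xin).
Qed.

Lemma labelled_ball_iso_comp (L L' : Type) (lam : T -> L) (h : L -> L') v1 v2 :
  labelled_ball_iso e lam v1 v2 -> labelled_ball_iso e (h \o lam) v1 v2.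
Proof.
by case=> f [f_inj f_im f_lam f_edge]; exists f; split=> // x /f_lam /= ->.
Qed.

End Balls.

Lemma connect_homo (T T' : finType) (e : rel T) (e' : rel T') (f : T -> T') :
  {homo f : x y / e x y >-> e' x y} ->
  forall x y, connect e x y -> connect e' (f x) (f y).
Proof.
move=> f_homo x y /connectP [p + ->] {y}; elim: p x => [|z p IHp] x /=.
  by rewrite connect0.
by case/andP=> /f_homo exz /IHp; apply: connect_trans (connect1 exz).
Qed.

Section CoveringLabelling.
Variables (T T' : finType) (e : rel T) (e' : rel T') (gamma : T -> T').
Hypothesis (e_sym : symmetric e) (e_irr : irreflexive e).
Hypothesis gamma_cov : covering e e' gamma.

Let gamma_ball_inj v : {in ball e v &, injective gamma}.
Proof. by case: gamma_cov => _ _ /(_ v) []. Qed.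

Let gamma_ball v : gamma @: ball e v = ball e' (gamma v).
Proof. by case: gamma_cov => _ _ /(_ v) []. Qed.

(* Two vertices with the same image have isomorphic balls: send x to the unique
   vertex of the other ball with the same image. *)
Lemma covering_ball_iso v1 v2 :
  gamma v1 = gamma v2 -> labelled_ball_iso e gamma v1 v2.
Proof.
move=> g12.
have lift x : x \in ball e v1 -> exists2 y, y \in ball e v2 & gamma x = gamma y.
  by move=> xin; apply/imsetP; rewrite gamma_ball -g12 -gamma_ball imset_f.
pose f x := odflt x [pick y in ball e v2 | gamma y == gamma x].
have fP x : x \in ball e v1 -> f x \in ball e v2 /\ gamma (f x) = gamma x.
  rewrite /f => /lift [y yin gy]; case: pickP => [z /andP [zin /eqP] //|].
  by move/(_ y); rewrite yin gy eqxx.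
have f_inj : {in ball e v1 &, injective f}.
  move=> x y xin yin fxy; apply: (gamma_ball_inj xin yin).
  by rewrite -(fP x xin).2 -(fP y yin).2 fxy.
have f_center x : x \in ball e v1 -> (f x == v2) = (x == v1).
  move=> xin; have [fxin gfx] := fP x xin.
  apply/eqP/eqP => [fx2|x1]; last subst x.
    by apply: (gamma_ball_inj xin (ball_center e v1)); rewrite -gfx fx2.
  by apply: (gamma_ball_inj fxin (ball_center e v2)); rewrite gfx.
exists f; split=> // [|x /fP [] //|x y xin yin].
- apply/setP=> y; apply/imsetP/idP => [[x /fP [? _] ->] //|yin].
  have [x xin gx] : exists2 x, x \in ball e v1 & gamma y = gamma x.
    by apply/imsetP; rewrite gamma_ball g12 -gamma_ball imset_f.
  exists x => //; have [fxin gfx] := fP x xin.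
  by apply: (gamma_ball_inj yin fxin); rewrite gfx.
- have [fxin _] := fP x xin; have [fyin _] := fP y yin.
  by rewrite !ball_edgeE // !f_center.
Qed.

Definition covering_label (x : T) : nat := enum_rank (gamma x).

Lemma covering_labelE x y : covering_label x = covering_label y <-> gamma x = gamma y.
Proof. by rewrite /covering_label; split=> [/val_inj/enum_rank_inj|->]. Qed.

Lemma covering_label_locally_bijective : locally_bijective e covering_label.
Proof.
split=> [v x y xin yin|v1 v2 /covering_labelE g12].
  by split=> [/covering_labelE/(gamma_ball_inj xin yin)|->].
exact: (labelled_ball_iso_comp (fun y => val (enum_rank y)) (covering_ball_iso g12)).
Qed.

End CoveringLabelling.

Lemma injective_covering_bij (T T' : finType) (e : rel T) (e' : rel T')
    (gamma : T -> T') :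
  covering e e' gamma -> injective gamma -> bijective gamma.
Proof.
case=> gamma_onto _ _ gamma_inj; apply: (inj_card_bij gamma_inj).
rewrite -(card_codom gamma_inj); apply/subset_leq_card/subsetP => y _.
by have [x <-] := gamma_onto y; apply: codom_f.
Qed.

Section LabelQuotient.
Variables (T : finType) (e : rel T) (lam : T -> nat).
Hypothesis lam_lb : locally_bijective e lam.

(* The quotient vertices are the label classes, each represented by a canonical member. *)
Definition label_rep x := odflt x [pick y | lam y == lam x].

Lemma lam_label_rep x : lam (label_rep x) = lam x.
Proof. by rewrite /label_rep; case: pickP => [y /eqP|]. Qed.

Lemma label_rep_eq x y : lam x = lam y -> label_rep x = label_rep y.
Proof.
by rewrite /label_rep => ->; case: pickP => // /(_ y); rewrite eqxx.
Qed.

Lemma label_repK x : label_rep (label_rep x) == label_rep x.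
Proof. exact/eqP/label_rep_eq/lam_label_rep. Qed.

Definition label_class := {x : T | label_rep x == x}.

Definition to_class x : label_class := exist _ (label_rep x) (label_repK x).

Lemma to_classE x y : to_class x = to_class y <-> lam x = lam y.
Proof.
split=> [/(congr1 val) /= eq_rep|/label_rep_eq eq_rep]; last exact: val_inj.
by rewrite -lam_label_rep eq_rep lam_label_rep.
Qed.

Lemma to_class_val a : to_class (val a) = a.
Proof. exact/val_inj/eqP/(valP a). Qed.

Definition quotient_edge (a b : label_class) : bool :=
  [exists x, [exists y, [&& e x y, to_class x == a & to_class y == b]]].

Lemma quotient_edgeP a b :
  reflect (exists x y, [/\ e x y, to_class x = a & to_class y = b])
          (quotient_edge a b).
Proof.
apply: (iffP existsP) => [[x /existsP [y /and3P [exy /eqP <- /eqP <-]]]|].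
  by exists x, y.
by case=> x [y [exy <- <-]]; exists x; apply/existsP; exists y; rewrite exy !eqxx.
Qed.

Lemma to_class_homo : {homo to_class : x y / e x y >-> quotient_edge x y}.
Proof. by move=> x y exy; apply/quotient_edgeP; exists x, y. Qed.

(* Irreflexivity: adjacent vertices lie in a common ball, where labels are distinct. *)
Lemma quotient_graph : is_graph e -> is_graph quotient_edge.
Proof.
case=> [[e_sym e_irr] e_conn]; split; first split.
- move=> a b; apply/quotient_edgeP/quotient_edgeP => -[x [y [exy <- <-]]];
    by exists y, x; rewrite e_sym.
- move=> a; apply/negbTE/quotient_edgeP => -[x [y [exy gx gy]]].
  have lxy : lam x = lam y by apply/to_classE; rewrite gx gy.
  have xy := (lam_lb.1 x x y (ball_center e x) (ball_neighbour exy)).1 lxy.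
  by move: exy; rewrite xy e_irr.
- move=> a b; rewrite -(to_class_val a) -(to_class_val b).
  exact/connect_homo/e_conn/to_class_homo.
Qed.

Lemma to_class_covering : covering e quotient_edge to_class.
Proof.
split=> [a|x y|v]; [by exists (val a); apply: to_class_val | exact: to_class_homo |].
split=> [x y xin yin /to_classE|]; first by apply: (lam_lb.1 v x y xin yin).1.
apply/setP=> b; rewrite [in RHS]inE; apply/imsetP/idP => [[u + ->]|].
  by rewrite inE => /orP [/eqP ->|/to_class_homo ->]; rewrite ?eqxx ?orbT.
case/orP => [/eqP ->|/quotient_edgeP [x [y [exy /to_classE lxv <-]]]].
  by exists v; rewrite ?ball_center.
have [f [_ f_im f_lam _]] := lam_lb.2 x v lxv.
exists (f y); first by rewrite -f_im imset_f ?ball_neighbour.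
by apply/to_classE; rewrite f_lam ?ball_neighbour.
Qed.

End LabelQuotient.

Theorem mainTheorem12 (T : finType) (e : rel T) :
  is_graph e -> (non_ambiguous e <-> covering_minimal e).
Proof.
move=> G_graph; have [[e_sym e_irr] _] := G_graph; split.
- move=> G_nonamb T' e' gamma _ gamma_cov.
  have lam_lb := covering_label_locally_bijective e_sym e_irr gamma_cov.
  have [lam_inj|lam_ninj] := injectiveP (covering_label gamma).
    apply: (injective_covering_bij gamma_cov) => x y gxy.
    by apply/lam_inj/covering_labelE.
  by case: G_nonamb; exists (covering_label gamma).
- move=> G_min [lam [lam_lb lam_ninj]]; apply: lam_ninj => x y lxy.
  have /bij_inj := G_min _ _ _ (quotient_graph lam_lb G_graph) (to_class_covering lam_lb).
  by apply; apply/to_classE.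
Qed.
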